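(* Let $S=\{x_1,\dots,x_n\}$ be a GCD closed set of positive integers with $x_1<x_2<\cdots<x_n$. (1) If $x_i\mid x_j$ for all $1\le i<j\le n$, then $[S]$ is nonsingular. (2) If the numbers $x_2/x_1,x_3/x_1,\dots,x_n/x_1$ are pairwise relatively prime, then $[S]$ is nonsingular. (3) If for each $k$ with $3\le k\le n$ there exists at most one index $i_k$ with $2\le i_k\le k-1$ and $x_{i_k}\mid x_k$, then $[S]$ is nonsingular.
   Context: $S$ is GCD closed if $\gcd(x,y)\in S$ for all $x,y\in S$. The LCM matrix $[S]$ has $(i,j)$ entry $\mathrm{lcm}(x_i,x_j)$. *)

From HB Require Import structures.
From mathcomp Require Import all_boot all_order all_algebra.
Set Implicit Arguments. Unset Strict Implicit. Unset Printing Implicit Defensive.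
Import GRing.Theory Num.Theory.

(* The set S = {x_0 < ... < x_(n-1)} is given by a function x : nat -> nat,
   only its values on indices i < n matter (0-based indexing). *)

Definition strictly_increasing (n : nat) (x : nat -> nat) : Prop :=
  forall i j, i < j -> j < n -> x i < x j.

Definition positive_elems (n : nat) (x : nat -> nat) : Prop :=
  forall i, i < n -> 0 < x i.

Definition gcd_closed (n : nat) (x : nat -> nat) : Prop :=
  forall i j, i < n -> j < n -> exists2 k, k < n & gcdn (x i) (x j) = x k.

Definition lcm_matrix (n : nat) (x : nat -> nat) : 'M[rat]_n :=
  \matrix_(i < n, j < n) ((lcmn (x i) (x j))%:R : rat).

From HB Require Import structures.
From mathcomp Require Import all_boot all_order all_algebra.
From mathcomp Require Import ring.
Import GRing.Theory Num.Theory.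

Set Implicit Arguments.
Unset Strict Implicit.
Unset Printing Implicit Defensive.

(* In each of the three cases every x_i with i > 0 has a greatest proper
   divisor x_(p i) in S, in the sense that every proper divisor of x_i in S
   divides x_(p i).  GCD closure then gives gcd(x_i, x_j) = gcd(x_(p i), x_j)
   whenever x_i does not divide x_j, in particular for all j < i.  Hence
   subtracting (x_i / x_(p i)) times row p i from row i of [S] kills every
   entry left of the diagonal, and leaves x_i (x_(p i) - x_i) / x_(p i) != 0
   on it: the reduced matrix is triangular with nonzero diagonal. *)

Lemma lcmn_natrE (R : numFieldType) (a b : nat) : 0 < gcdn a b ->
  ((lcmn a b)%:R = a%:R * b%:R / (gcdn a b)%:R :> R)%R.
Proof.
move=> g_gt0; have g_neq0 : ((gcdn a b)%:R != 0 :> R)%R by rewrite pnatr_eq0 -lt0n.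
by apply: (mulIf g_neq0); rewrite divfK // -!natrM muln_lcm_gcd.
Qed.

Section GcdClosedLcmMatrix.

Variables (n : nat) (x : nat -> nat).
Hypotheses (Hpos : positive_elems n x) (Hinc : strictly_increasing n x)
  (Hgcd : gcd_closed n x).

Lemma elem_inj i j : i < n -> j < n -> x i = x j -> i = j.
Proof.
move=> i_lt j_lt e; case: (ltngtP i j) => // [ij|ji].
  by have := Hinc ij j_lt; rewrite e ltnn.
by have := Hinc ji i_lt; rewrite e ltnn.
Qed.

Lemma natr_elem_neq0 i : i < n -> ((x i)%:R != 0 :> rat)%R.
Proof. by move=> i_lt; rewrite pnatr_eq0 -lt0n Hpos. Qed.

Lemma dvdn_elem_lt i j : i < n -> j < n -> j != i -> x j %| x i -> j < i.
Proof.
move=> i_lt j_lt ji d; case: (ltngtP j i) => // [ij|ji_eq]; last by rewrite ji_eq eqxx in ji.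
by have := dvdn_leq (Hpos i_lt) d; rewrite leqNgt Hinc.
Qed.

Lemma elem0_dvdn j : j < n -> x 0 %| x j.
Proof.
move=> j_lt; have n_gt0 : 0 < n by apply: leq_ltn_trans j_lt.
have [k k_lt ek] := Hgcd n_gt0 j_lt.
have k0 : k = 0.
  apply: contraTeq (dvdn_gcdl (x 0) (x j)); rewrite -lt0n ek => k_gt0.
  by apply/negP => /(dvdn_leq (Hpos n_gt0)); rewrite leqNgt Hinc.
by rewrite -k0 -ek dvdn_gcdr.
Qed.

Definition greatest_proper_divisor i p :=
  [/\ p != i, x p %| x i &
      forall j, j < n -> j != i -> x j %| x i -> x j %| x p].

Lemma gcdn_greatest_proper_divisor i p j : i < n -> j < n ->
  greatest_proper_divisor i p -> ~~ (x i %| x j) ->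
  gcdn (x i) (x j) = gcdn (x p) (x j).
Proof.
move=> i_lt j_lt [_ p_dvd p_max] i_ndvd.
have [k k_lt ek] := Hgcd i_lt j_lt.
have k_dvd : x k %| x i by rewrite -ek dvdn_gcdl.
have k_neq : k != i by apply: contraNneq i_ndvd => ki; rewrite -ki -ek dvdn_gcdr.
have k_dvd_p : x k %| x p by apply: p_max.
apply/eqP; rewrite eqn_dvd !dvdn_gcd !dvdn_gcdr (dvdn_trans (dvdn_gcdl _ _) p_dvd).
by rewrite ek k_dvd_p.
Qed.

Section ParentReduction.

Variable p : 'I_n -> 'I_n.
Hypothesis p_greatest : forall i : 'I_n, 0 < i -> greatest_proper_divisor i (p i).

Local Notation L := (lcm_matrix n x).
Local Notation ratio i := ((x i)%:R / (x (p i))%:R : rat)%R.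

Definition parent_reduction : 'M[rat]_n :=
  (\matrix_(i, k) ((k == i)%:R - ((0 < i)%N && (k == p i))%:R * ratio i))%R.

Lemma parent_reductionE i j : ((parent_reduction *m L) i j =
  (lcmn (x i) (x j))%:R - ((0 < i)%N)%:R * ratio i * (lcmn (x (p i)) (x j))%:R)%R.
Proof.
rewrite !mxE; under eq_bigr => k _ do rewrite !mxE mulrBl.
rewrite sumrB (bigD1 i) //= eqxx mul1r big1 ?addr0; last first.
  by move=> k /negbTE ->; rewrite mul0r.
congr (_ - _)%R; rewrite (bigD1 (p i)) //= eqxx andbT big1 ?addr0 ?mulrA //.
by move=> k /negbTE ->; rewrite andbF !mul0r.
Qed.

Lemma parent_reduction_lower0 (i j : 'I_n) :
  j < i -> ((parent_reduction *m L) i j = 0)%R.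
Proof.
move=> ji; have i_gt0 : 0 < i by apply: leq_ltn_trans ji.
have i_ndvd : ~~ (x i %| x j).
  by apply/negP => /(dvdn_leq (Hpos (ltn_ord j))); rewrite leqNgt Hinc.
rewrite parent_reductionE i_gt0 mul1r !lcmn_natrE ?gcdn_gt0 ?Hpos //.
rewrite (gcdn_greatest_proper_divisor (ltn_ord i) (ltn_ord j) (p_greatest i_gt0) i_ndvd).
have g_neq0 : ((gcdn (x (p i)) (x j))%:R != 0 :> rat)%R.
  by rewrite pnatr_eq0 -lt0n gcdn_gt0 Hpos.
by field; rewrite g_neq0 natr_elem_neq0.
Qed.

Lemma parent_reduction_diag_neq0 (i : 'I_n) : ((parent_reduction *m L) i i != 0)%R.
Proof.
rewrite parent_reductionE (lcmn_idPr (dvdnn _)); have [i0|i_gt0] := posnP i.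
  by rewrite {2}i0 !mul0r subr0 natr_elem_neq0.
have [p_neq p_dvd _] := p_greatest i_gt0.
have xp_neq0 := natr_elem_neq0 (ltn_ord (p i)).
have xi_neq0 := natr_elem_neq0 (ltn_ord i).
rewrite mul1r (lcmn_idPr p_dvd).
have -> : ((x i)%:R - ratio i * (x i)%:R =
           (x i)%:R * ((x (p i))%:R - (x i)%:R) / (x (p i))%:R :> rat)%R.
  by field.
rewrite !mulf_neq0 ?invr_eq0 // subr_eq0 eqr_nat.
by apply: contra p_neq => /eqP/(elem_inj (ltn_ord _) (ltn_ord _))/val_inj ->.
Qed.

Lemma det_lcm_matrix_neq0_parent : (\det L != 0)%R.
Proof.
have det_reduced : (\det (parent_reduction *m L) =
                    \prod_(i < n) (parent_reduction *m L) i i)%R.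
  rewrite -det_tr det_trig; last first.
    apply/forallP => i; apply/forallP => j; apply/implyP => ij.
    by rewrite mxE parent_reduction_lower0.
  by apply: eq_bigr => i _; rewrite mxE.
have : (\det (parent_reduction *m L) != 0)%R.
  by rewrite det_reduced; apply/prodf_neq0 => i _; apply: parent_reduction_diag_neq0.
by rewrite det_mulmx; apply: contra => /eqP ->; rewrite mulr0.
Qed.

End ParentReduction.

Lemma det_lcm_matrix_neq0 :
  (forall i, 0 < i -> i < n -> exists2 p, p < n & greatest_proper_divisor i p) ->
  (\det (lcm_matrix n x) != 0)%R.
Proof.
move=> greatest_ex.
have /fin_all_exists [p p_greatest] : forall i : 'I_n, exists p : 'I_n,
    0 < i -> greatest_proper_divisor i p.
  move=> i; have [i0|i_gt0] := posnP i; first by exists i; rewrite i0.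
  by have [q q_lt q_greatest] := greatest_ex i i_gt0 (ltn_ord i); exists (Ordinal q_lt).
exact: (det_lcm_matrix_neq0_parent p_greatest).
Qed.

Lemma greatest_proper_divisor_pred i :
  (forall j k, j < k -> k < n -> x j %| x k) ->
  0 < i -> i < n -> greatest_proper_divisor i i.-1.
Proof.
move=> chain i_gt0 i_lt; have pred_lt : i.-1 < i by rewrite prednK.
split; first by rewrite neq_ltn pred_lt.
- exact: chain.
move=> j j_lt ji d; have := dvdn_elem_lt i_lt j_lt ji d.
rewrite -(prednK i_gt0) ltnS leq_eqVlt => /predU1P [-> //|j_lt_pred].
exact: chain (ltn_trans pred_lt i_lt).
Qed.

Lemma greatest_proper_divisor0 i : 0 < i -> i < n ->
  (forall j, 0 < j -> j < i -> ~~ (x j %| x i)) -> greatest_proper_divisor i 0.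
Proof.
move=> i_gt0 i_lt no_dvd; split; rewrite ?neq_ltn ?i_gt0 ?elem0_dvdn //.
move=> j j_lt ji d; have [-> //|j_gt0] := posnP j.
by move: (no_dvd j j_gt0 (dvdn_elem_lt i_lt j_lt ji d)); rewrite d.
Qed.

Lemma greatest_proper_divisor_unique i q : 0 < q -> q < i -> i < n ->
  x q %| x i -> (forall j, 0 < j -> j < i -> x j %| x i -> j = q) ->
  greatest_proper_divisor i q.
Proof.
move=> q_gt0 qi i_lt q_dvd uniq_dvd; split; rewrite ?neq_ltn ?qi //.
move=> j j_lt ji d; have [->|j_gt0] := posnP j.
  by apply: elem0_dvdn; apply: ltn_trans i_lt.
by rewrite (uniq_dvd j j_gt0 (dvdn_elem_lt i_lt j_lt ji d) d).
Qed.

(* x_j | x_i would give x_j / x_0 | x_i / x_0, so coprimality forces x_j = x_0. *)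
Lemma coprime_quotients_ndvdn i j : 0 < j -> j < i -> i < n ->
  coprime (x j %/ x 0) (x i %/ x 0) -> ~~ (x j %| x i).
Proof.
move=> j_gt0 ji i_lt cop; have j_lt := ltn_trans ji i_lt.
have x0_gt0 := Hpos (leq_ltn_trans (leq0n j) j_lt).
apply/negP => d; have q_dvd : x j %/ x 0 %| x i %/ x 0.
  by rewrite -(dvdn_pmul2r x0_gt0) !divnK ?elem0_dvdn.
move: cop; rewrite /coprime (gcdn_idPl q_dvd) => /eqP q1.
have := Hinc j_gt0 j_lt.
by rewrite -(divnK (elem0_dvdn j_lt)) q1 mul1n ltnn.
Qed.

End GcdClosedLcmMatrix.

Theorem corollary4p7 (n : nat) (x : nat -> nat)
  (Hpos : positive_elems n x) (Hinc : strictly_increasing n x)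
  (Hgcd : gcd_closed n x) :
  ((forall i j, i < j -> j < n -> x i %| x j) ->
     (\det (lcm_matrix n x) != 0)%R) /\
  (* (2) x_2/x_1, ..., x_n/x_1 pairwise coprime (0-based: indices 1..n-1) *)
  ((forall i j, 1 <= i -> i < j -> j < n ->
       coprime (x i %/ x 0) (x j %/ x 0)) ->
     (\det (lcm_matrix n x) != 0)%R) /\
  (* (3) for each k (3<=k<=n, 1-based) at most one i_k, 2<=i_k<=k-1, with x_{i_k} | x_k *)
  ((forall k, 2 <= k -> k < n ->
       forall i i', 1 <= i -> i < k -> x i %| x k ->
                    1 <= i' -> i' < k -> x i' %| x k -> i = i') ->
     (\det (lcm_matrix n x) != 0)%R).
Proof.
split; [|split] => Hcase; apply: det_lcm_matrix_neq0 => // i i_gt0 i_lt.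
- exists i.-1; first exact: leq_ltn_trans (leq_pred i) i_lt.
  exact: greatest_proper_divisor_pred.
- exists 0; first exact: leq_ltn_trans (leq0n i) i_lt.
  apply: greatest_proper_divisor0 => // j j_gt0 ji.
  by apply: (coprime_quotients_ndvdn Hpos Hinc Hgcd) => //; apply: Hcase.
- have [q /and3P [q_gt0 qi q_dvd]|none] :=
    pickP (fun q : 'I_n => [&& 0 < q, q < i & x q %| x i]).
    exists q => //; apply: greatest_proper_divisor_unique => // j j_gt0 ji d.
    exact: Hcase (leq_ltn_trans q_gt0 qi) i_lt _ _ j_gt0 ji d q_gt0 qi q_dvd.
  exists 0; first exact: leq_ltn_trans (leq0n i) i_lt.
  apply: greatest_proper_divisor0 => // j j_gt0 ji.
  by have := none (Ordinal (ltn_trans ji i_lt)); rewrite /= j_gt0 ji => /negbT.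
Qed.
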